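(* Let $A\in\mathbb{R}^{n\times n}$, let $\bar T\ge1$ be an integer, let $\mathcal{W}\subset\mathbb{R}^n$ be a closed convex set with $0\in\mathcal{W}$, and let $\mathrm{sat}(\cdot|\mathcal{W}):\mathbb{R}^n\to\mathcal{W}$ be a map with $|\mathrm{sat}(w|\mathcal{W})-w|=\min\{|w'|:w+w'\in\mathcal{W}\}$ for all $w$. Define $\bar\eta=\sup\{\eta\ge0:\mathcal{B}_\eta\subset\mathcal{W}\}$, where $\mathcal{B}_\eta=\{w:|w|<\eta\}$, and assume $\bar\eta>0$. For $\mathbf{w}\in\ell^n$ define $\hat{\mathbf{w}}\in\ell^n$ recursively by $\hat w_t=w_t$ for $t<\bar T$ and $$\hat w_t=A^{\bar T}\big(\hat w_{t-\bar T}-\mathrm{sat}(\hat w_{t-\bar T}|\mathcal{W})\big)+w_t\quad(t\ge\bar T).$$ Let $p\in\{1,2,\dots\}\cup\{\infty\}$. Then: (1) for every $0\le\gamma<\min\{1,|A^{\bar T}|\}$: if $\|\mathbf{w}\|_p\le(1-\gamma)\frac{|A^{\bar T}|\,\bar\eta}{|A^{\bar T}|-\gamma}$, then $\|\hat{\mathbf{w}}\|_p\le\frac{1}{1-\gamma}\|\mathbf{w}\|_p$; (2) if $|A^{\bar T}|<1$, then for all $\mathbf{w}\in\ell^n_p$, $\|\hat{\mathbf{w}}\|_p\le\frac{1}{1-|A^{\bar T}|}\|\mathbf{w}\|_p$.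
   Context: $|\cdot|$ is a fixed norm on $\mathbb{R}^n$ and, for matrices, $|A|$ is the induced operator norm. $\ell^n$ is the space of sequences in $\mathbb{R}^n$, $\|\mathbf{x}\|_p=(\sum_k|x_k|^p)^{1/p}$ for $p<\infty$, $\|\mathbf{x}\|_\infty=\sup_k|x_k|$, $\ell^n_p=\{\mathbf{x}:\|\mathbf{x}\|_p<\infty\}$. (In the paper, $\hat{\mathbf{w}}$ is the internal state of a ''blended'' system level controller in closed loop with the saturated linear system $x_t=Ax_{t-1}+B\,\mathrm{sat}(u_{t-1}|\mathcal{U})+w_t$, whose dynamics reduce to the displayed recursion.) *)

From HB Require Import structures.
From mathcomp Require Import all_boot all_order all_algebra.
From mathcomp Require Import all_classical all_reals all_analysis.
Set Implicit Arguments. Unset Strict Implicit. Unset Printing Implicit Defensive.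
Import Order.TTheory GRing.Theory Num.Theory.
Import numFieldNormedType.Exports.
Local Open Scope classical_set_scope.
Local Open Scope ring_scope.

Definition is_norm (R : realType) (n : nat) (N : 'cV[R]_n -> R) : Prop :=
  [/\ forall x, N x = 0 -> x = 0,
      forall x y, N (x + y) <= N x + N y &
      forall (c : R) x, N (c *: x) = `|c| * N x].

Definition opnorm (R : realType) (n : nat) (N : 'cV[R]_n -> R) (M : 'M[R]_n) : R :=
  sup [set N (M *m x) | x in [set x | N x <= 1]].

Definition convex_set (R : realType) (n : nat) (W : set 'cV[R]_n) : Prop :=
  forall x y (t : R), W x -> W y -> 0 <= t <= 1 -> W (t *: x + (1 - t) *: y).

Definition is_sat (R : realType) (n : nat) (N : 'cV[R]_n -> R)
    (W : set 'cV[R]_n) (sat : 'cV[R]_n -> 'cV[R]_n) : Prop :=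
  forall w, W (sat w) /\ (forall w', W (w + w') -> N (sat w - w) <= N w').

Definition ball_N (R : realType) (n : nat) (N : 'cV[R]_n -> R) (eta : R) : set 'cV[R]_n :=
  [set w | N w < eta].

Definition etabar (R : realType) (n : nat) (N : 'cV[R]_n -> R) (W : set 'cV[R]_n) : \bar R :=
  ereal_sup [set eta%:E | eta in [set eta : R | 0 <= eta /\ ball_N N eta `<=` W]].

Inductive pexp := Pfin of nat | Pinf.
Definition pexp_ok (p : pexp) : Prop :=
  match p with Pfin q => (1 <= q)%N | Pinf => True end.

(* ||x||_p in the extended reals (= +oo when x is not in l^n_p). *)
Definition lpnorm (R : realType) (n : nat) (N : 'cV[R]_n -> R) (p : pexp)
    (x : nat -> 'cV[R]_n) : \bar R :=
  match p with
  | Pfin q => ((\sum_(0 <= k <oo) ((N (x k)) ^+ q)%:E) `^ (q%:R^-1))%E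
  | Pinf => ereal_sup [set (N (x k))%:E | k in [set: nat]]
  end.

Set Warnings "-notation-overridden,-ambiguous-paths,-notation-incompatible-prefix".
From HB Require Import structures.
From mathcomp Require Import all_boot all_order all_algebra.
From mathcomp Require Import all_classical all_reals all_analysis.
From mathcomp Require Import ring lra.
Import Order.TTheory GRing.Theory Num.Theory.
Import numFieldNormedType.Exports.
Local Open Scope classical_set_scope.
Local Open Scope ring_scope.

(* Write a = |A^T| and u_t = |what_t|, v_t = |w_t|.
   Since |A^T x| <= a |x| and |h - sat h| <= max(0, |h| - etabar) (W contains
   the ball of radius etabar), the recursion gives the scalar "delayed
   inequality" u_t <= g u_{t-T} + v_t, for
   - g = gamma, as long as u_{t-T} <= a etabar / (a - gamma)   (part 1);
   - g = a, unconditionally, using only |h - sat h| <= |h|   (part 2).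
   For 0 <= g < 1, convexity of x^q turns the delayed inequality into the
   partial-sum bound sum u^q <= (1-g)^-q sum v^q, and a sup bound for p = oo;
   in the conditional case an induction on t shows the level is never
   exceeded when |w|_p is small enough. *)

Lemma entry_le_mx_norm (R : realType) m k (x : 'M[R]_(m, k)) i j : `|x i j| <= `|x|.
Proof.
rewrite (_ : `|x| = mx_norm x) // mx_normrE.
exact: (le_bigmax _ (fun ij : 'I_m * 'I_k => `|x ij.1 ij.2|) (i, j)).
Qed.

Lemma mx_norm_trmx (R : realType) m k (x : 'M[R]_(m, k)) : `|x^T| = `|x|.
Proof.
have le_tr m' k' (y : 'M[R]_(m', k')) : `|y^T| <= `|y|.
  rewrite [X in X <= _](_ : _ = mx_norm y^T) // mx_normrE.
  by apply: bigmax_le => // -[i j] _; rewrite mxE entry_le_mx_norm.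
by apply/le_anti/andP; split; [exact: le_tr | have := le_tr _ _ x^T; rewrite trmxK].
Qed.

Section Seminorm.
Context {R : realType} {m k : nat} {N : 'M[R]_(m, k) -> R}.
Hypothesis N_triangle : forall x y, N (x + y) <= N x + N y.
Hypothesis N_homogeneous : forall (c : R) x, N (c *: x) = `|c| * N x.

Lemma seminorm0 : N 0 = 0.
Proof. by rewrite -(scale0r 0) N_homogeneous normr0 mul0r. Qed.

Lemma seminormN x : N (- x) = N x.
Proof. by rewrite -scaleN1r N_homogeneous normrN normr1 mul1r. Qed.

Lemma seminorm_ge0 x : 0 <= N x.
Proof.
by have := N_triangle x (- x); rewrite subrr seminorm0 seminormN; lra.
Qed.

Lemma seminorm_sum (I : Type) (r : seq I) (P : pred I) (F : I -> 'M[R]_(m, k)) :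
  N (\sum_(i <- r | P i) F i) <= \sum_(i <- r | P i) N (F i).
Proof.
apply: (big_ind2 (fun x y => N x <= y)); first by rewrite seminorm0.
  by move=> x1 x2 y1 y2 h1 h2; apply: le_trans (N_triangle _ _) (lerD h1 h2).
by [].
Qed.

(* Expanding x in the basis of elementary matrices: N x <= K |x|. *)
Lemma seminorm_upper : exists K, 0 <= K /\ forall x, N x <= K * `|x|.
Proof.
exists (\sum_i \sum_j N (delta_mx i j)); split.
  by apply: sumr_ge0 => i _; apply: sumr_ge0 => j _; exact: seminorm_ge0.
move=> x; rewrite {1}(matrix_sum_delta x) mulr_suml.
apply: le_trans (seminorm_sum _ _ _ _) _; apply: ler_sum => i _.
rewrite mulr_suml; apply: le_trans (seminorm_sum _ _ _ _) _; apply: ler_sum => j _.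
by rewrite N_homogeneous mulrC ler_wpM2l ?seminorm_ge0 ?entry_le_mx_norm.
Qed.

Lemma seminorm_dist x y : `|N x - N y| <= N (x - y).
Proof.
have := N_triangle y (x - y); have := N_triangle x (y - x).
by rewrite !subrKC -opprB seminormN ler_norml => ? ?; apply/andP; split; lra.
Qed.

Lemma seminorm_continuous : continuous N.
Proof.
have [K [K0 HK]] := seminorm_upper.
have K1 : 0 < K + 1 by rewrite ltr_wpDl.
move=> x; apply/(@cvgrPdist_lt _ _ _ _ (nbhs_filter x)) => e e0.
have := @cvgr_dist_lt _ _ _ _ (nbhs_filter x) id x cvg_id _ (divr_gt0 e0 K1).
apply: filterS => y /= xy; rewrite ltr_pdivlMr // in xy.
apply: le_lt_trans (seminorm_dist x y) _; apply: le_lt_trans (HK _) _.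
by apply: le_lt_trans xy; rewrite mulrC ler_wpM2l // lerDl.
Qed.

End Seminorm.

(* Any norm on R^n dominates a positive multiple of the max-entry norm:
   a continuous positive function attains a positive minimum on the compact
   unit sphere of the max-entry norm. *)
Lemma norm_lower {R : realType} {n : nat} {N : 'cV[R]_n -> R} :
  is_norm N -> exists m, 0 < m /\ forall x, m * `|x| <= N x.
Proof.
move=> [N_def N_tri N_hom].
pose f (v : 'rV[R]_n) := N v^T.
have f_tri u v : f (u + v) <= f u + f v by rewrite /f linearD; exact: N_tri.
have f_hom c u : f (c *: u) = `|c| * f u by rewrite /f linearZ /= N_hom.
have f_ge0 := seminorm_ge0 f_tri f_hom.
have [[v0 v0_neq0]|all0] := pselect (exists v : 'rV[R]_n, v != 0); last first.
  exists 1; split => // x; suff -> : x = 0 by rewrite normr0 mulr0 seminorm0.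
  apply: trmx_inj; apply/eqP; rewrite trmx0.
  by apply: contra_notT all0 => ?; exists x^T.
pose S := [set v : 'rV[R]_n | `|v| = 1].
have normalize v : v != 0 -> S (`|v|^-1 *: v).
  by move=> v_neq0; rewrite /S /= normrZ normfV normr_id mulVf // normr_eq0.
have S_compact : compact S.
  apply: bounded_closed_compact; first by exists 1; split => // r r1 x /= ->; exact: ltW.
  exact: (preimage_closed (fun v _ => @norm_continuous _ _ v) (@closed_eq R 1)).
have [c /set_mem Sc c_min] := compact_EVT_min (ex_intro _ _ (normalize _ v0_neq0))
  S_compact (continuous_subspaceT (seminorm_continuous f_tri f_hom)).
have fc_gt0 : 0 < f c.
  rewrite lt0r f_ge0 andbT; apply/eqP => /N_def/(congr1 trmx).
  rewrite trmxK trmx0 => c0; move: Sc; rewrite /S /= c0 normr0.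
  by move=> /esym/eqP; rewrite oner_eq0.
exists (f c); split => // x.
rewrite -mx_norm_trmx (_ : N x = f x^T); last by rewrite /f trmxK.
move: x^T => v; have [->|v_neq0] := eqVneq v 0; first by rewrite normr0 mulr0 f_ge0.
have := c_min _ (mem_set (normalize _ v_neq0)).
by rewrite f_hom normfV normr_id ler_pdivlMl ?normr_gt0 // mulrC.
Qed.

Section OperatorNorm.
Context {R : realType} {n : nat} {N : 'cV[R]_n -> R}.
Hypothesis N_norm : is_norm N.

Lemma opnorm_has_sup (M : 'M[R]_n) : has_sup [set N (M *m x) | x in [set x | N x <= 1]].
Proof.
have [_ N_tri N_hom] := N_norm.
have [m [m_gt0 Hm]] := norm_lower N_norm.
have MN_tri x y : N (M *m (x + y)) <= N (M *m x) + N (M *m y) by rewrite mulmxDr; exact: N_tri.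
have MN_hom c x : N (M *m (c *: x)) = `|c| * N (M *m x) by rewrite -scalemxAr N_hom.
have [K [K_ge0 HK]] := seminorm_upper MN_tri MN_hom.
split; first by exists 0, 0; rewrite /= ?mulmx0 ?(seminorm0 N_hom).
exists (K / m) => _ [x /= Nx1 <-]; apply: le_trans (HK x) _.
rewrite ler_wpM2l // -[m^-1]mul1r ler_pdivlMr // mulrC; exact: le_trans (Hm x) Nx1.
Qed.

Lemma opnorm_ge0 (M : 'M[R]_n) : 0 <= opnorm N M.
Proof.
have [_ _ N_hom] := N_norm.
apply: sup_upper_bound (opnorm_has_sup M) _ _.
by exists 0; rewrite /= ?mulmx0 (seminorm0 N_hom).
Qed.

Lemma opnorm_le (M : 'M[R]_n) x : N (M *m x) <= opnorm N M * N x.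
Proof.
have [N_def N_tri N_hom] := N_norm.
have N_ge0 := seminorm_ge0 N_tri N_hom.
have [/N_def ->|Nx_neq0] := eqVneq (N x) 0.
  by rewrite mulmx0 (seminorm0 N_hom) mulr0.
have Nx_gt0 : 0 < N x by rewrite lt0r Nx_neq0 N_ge0.
have -> : N (M *m x) = N (M *m ((N x)^-1 *: x)) * N x.
  by rewrite -scalemxAr N_hom gtr0_norm ?invr_gt0 // mulrAC mulVf ?mul1r.
rewrite ler_wpM2r ?N_ge0 //.
apply: sup_upper_bound (opnorm_has_sup M) _ _; exists ((N x)^-1 *: x) => //=.
by rewrite N_hom gtr0_norm ?invr_gt0 // mulVf.
Qed.

End OperatorNorm.

Section Saturation.
Context {R : realType} {n : nat} {N : 'cV[R]_n -> R}.
Context {W : set 'cV[R]_n} {sat : 'cV[R]_n -> 'cV[R]_n}.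
Hypothesis N_norm : is_norm N.
Hypothesis sat_min : is_sat N W sat.

Let N_tri : forall x y, N (x + y) <= N x + N y.
Proof. by case: N_norm. Qed.

Let N_hom : forall (c : R) x, N (c *: x) = `|c| * N x.
Proof. by case: N_norm. Qed.

Let residual_sym h : N (h - sat h) = N (sat h - h).
Proof. by rewrite -(seminormN N_hom) opprB. Qed.

Lemma residual_le (W0 : W 0) h : N (h - sat h) <= N h.
Proof.
rewrite residual_sym -(seminormN N_hom h); apply: (sat_min h).2.
by rewrite subrr.
Qed.

Lemma residual_in h : W h -> N (h - sat h) = 0.
Proof.
move=> Wh; apply/le_anti; rewrite (seminorm_ge0 N_tri N_hom) andbT.
by rewrite residual_sym -(seminorm0 N_hom); apply: (sat_min h).2; rewrite addr0.
Qed.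

(* If B_eta is contained in W, then h - sat h is at most max(0, |h| - eta):
   the points c h with |c h| < eta lie in W, so sat h is at least as close. *)
Lemma residual_deadzone eta h : 0 < eta -> ball_N N eta `<=` W ->
  N (h - sat h) <= Num.max 0 (N h - eta).
Proof.
move=> eta_gt0 ballW.
have [Nh_lt|Nh_ge] := ltP (N h) eta.
  by rewrite residual_in ?le_max ?lexx //; apply: ballW.
rewrite le_max; apply/orP; right; apply/ler_addgt0Pr => e e_gt0.
pose r := Num.max 0 (eta - e).
have r_ge0 : 0 <= r by rewrite le_max lexx.
have r_lt : r < eta by rewrite gt_max eta_gt0 gtrBl.
have Nh_gt0 : 0 < N h by apply: lt_le_trans Nh_ge.
have W_rh : W (h + (r / N h - 1) *: h).
  rewrite scalerBl scale1r addrC subrK; apply: ballW.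
  rewrite /ball_N /= N_hom ger0_norm; first by rewrite divfK ?gt_eqF.
  by rewrite divr_ge0 // ltW.
rewrite residual_sym; apply: le_trans ((sat_min h).2 _ W_rh) _.
rewrite N_hom ler0_norm; last by rewrite subr_le0 ler_pdivrMr // mul1r ltW // (lt_le_trans r_lt).
rewrite mulNr mulrBl mul1r divfK ?gt_eqF //.
have : eta - e <= r by rewrite le_max lexx orbT.
lra.
Qed.

Lemma etabar_ball E : etabar N W = E%:E -> ball_N N E `<=` W.
Proof.
move=> etabarE x Nx_lt; have : ((N x)%:E < etabar N W)%E by rewrite etabarE lte_fin.
move=> /ereal_sup_gt [_ [eta [_ ballW] <-]]; rewrite lte_fin => Nx_eta.
exact: ballW.
Qed.

Lemma etabar_pinfty h : etabar N W = +oo%E -> W h.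
Proof.
move=> etabarE; have : ((N h)%:E < etabar N W)%E by rewrite etabarE ltry.
move=> /ereal_sup_gt [_ [eta [_ ballW] <-]]; rewrite lte_fin => Nh_eta.
exact: ballW.
Qed.

End Saturation.

Section DelayedInequality.
Context {R : realType}.

Definition delay (T : nat) (u : nat -> R) (t : nat) : R :=
  if (T <= t)%N then u (t - T)%N else 0.

Lemma delay_ge0 T u t : (forall s, 0 <= u s) -> 0 <= delay T u t.
Proof. by move=> u_ge0; rewrite /delay; case: ifP. Qed.

Lemma pow_convex (q : nat) (x y l : R) : 0 <= x -> 0 <= y -> 0 <= l <= 1 ->
  (l * x + (1 - l) * y) ^+ q <= l * x ^+ q + (1 - l) * y ^+ q.
Proof.
move=> x_ge0 y_ge0 /andP[l_ge0 l_le1]; elim: q => [|q IH]; first by rewrite !expr0; lra.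
have S_ge0 : 0 <= l * x + (1 - l) * y by rewrite addr_ge0 ?mulr_ge0 ?subr_ge0.
rewrite exprS; apply: le_trans (ler_wpM2l S_ge0 IH) _.
have mono : 0 <= (x - y) * (x ^+ q - y ^+ q).
  have [xy|yx] := leP x y.
    by rewrite mulr_le0 ?subr_le0 ?lerXn2r ?nnegrE.
  by rewrite mulr_ge0 ?subr_ge0 ?lerXn2r ?nnegrE ?(ltW yx).
have : 0 <= l * (1 - l) * ((x - y) * (x ^+ q - y ^+ q)).
  by apply: mulr_ge0 => //; apply: mulr_ge0; lra.
rewrite !exprS; nra.
Qed.

Lemma sum_delay_le (T q K : nat) (u : nat -> R) : (0 < q)%N -> (forall t, 0 <= u t) ->
  \sum_(0 <= t < K) delay T u t ^+ q <= \sum_(0 <= t < K) u t ^+ q.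
Proof.
move=> q_gt0 u_ge0.
have -> : \sum_(0 <= t < K) delay T u t ^+ q = \sum_(0 <= t < K - T) u t ^+ q.
  elim: K => [|K IH]; first by rewrite sub0n !big_geq.
  rewrite big_nat_recr //= IH /delay; case: (leqP T K) => TK.
    by rewrite subSn // big_nat_recr.
  have /eqP -> : (K.+1 - T == 0)%N by rewrite subn_eq0.
  have /eqP -> : (K - T == 0)%N by rewrite subn_eq0 ltnW.
  by rewrite expr0n gtn_eqF // addr0.
rewrite [leRHS](big_cat_nat (leq0n (K - T)) (leq_subr T K)) /= lerDl.
by apply: sumr_ge0 => t _; exact: exprn_ge0.
Qed.

Section PowerSums.
Variables (T q : nat) (g : R) (u v : nat -> R).
Hypotheses (q_gt0 : (0 < q)%N) (g_ge0 : 0 <= g) (g_lt1 : g < 1).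
Hypotheses (u_ge0 : forall t, 0 <= u t) (v_ge0 : forall t, 0 <= v t).

(* Summing the convexity bound u_t^q <= g (delay u)_t^q + (1-g) (v_t/(1-g))^q
   gives U <= g U + (1-g) (1-g)^-q V for the partial sums U, V. *)
Lemma delayed_sums K : (forall t, (t < K)%N -> u t <= g * delay T u t + v t) ->
  \sum_(0 <= t < K) u t ^+ q <= ((1 - g)^-1) ^+ q * \sum_(0 <= t < K) v t ^+ q.
Proof.
move=> u_le.
set c := (1 - g)^-1.
have c_gt0 : 0 < c by rewrite invr_gt0 subr_gt0.
have gc : (1 - g) * c = 1 by rewrite mulfV // gt_eqF // subr_gt0.
have pointwise t : (t < K)%N ->
    u t ^+ q <= g * (delay T u t) ^+ q + (1 - g) * (c ^+ q * v t ^+ q).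
  move=> tK; apply: le_trans (lerXn2r _ _ _ (u_le t tK)) _; rewrite ?nnegrE //.
    by rewrite addr_ge0 ?mulr_ge0 ?delay_ge0.
  rewrite {1}(_ : v t = (1 - g) * (c * v t)); last by rewrite mulrA gc mul1r.
  rewrite -exprMn; apply: pow_convex; first exact: delay_ge0.
    exact: mulr_ge0 (ltW c_gt0) (v_ge0 t).
  by rewrite g_ge0 ltW.
set U := \sum_(0 <= t < K) u t ^+ q; set V := \sum_(0 <= t < K) v t ^+ q.
have : U <= g * U + (1 - g) * (c ^+ q * V).
  apply: (le_trans (y := \sum_(0 <= t < K)
     (g * (delay T u t) ^+ q + (1 - g) * (c ^+ q * v t ^+ q)))).
    rewrite /U big_nat_cond [leRHS]big_nat_cond.
    by apply: ler_sum => t /andP[/andP[_ tK] _]; exact: pointwise.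
  rewrite big_split /= -!mulr_sumr lerD2r ler_wpM2l //.
  exact: sum_delay_le.
rewrite -subr_ge0 -[X in 0 <= X](_ : (1 - g) * (c ^+ q * V - U) = _); last by ring.
by rewrite pmulr_rge0 ?subr_gt0 // subr_ge0.
Qed.

(* If the delayed inequality holds as long as the delayed value is at most
   B, and the bound of delayed_sums keeps the sums below B^q, then the
   inequality holds at every time: by induction, each u_{t-T} <= B. *)
Lemma delayed_sums_cond (T_ge1 : (1 <= T)%N) (B : R) : 0 <= B ->
  (forall t, delay T u t <= B -> u t <= g * delay T u t + v t) ->
  (forall K, ((1 - g)^-1) ^+ q * \sum_(0 <= t < K) v t ^+ q <= B ^+ q) ->
  forall K, \sum_(0 <= t < K) u t ^+ q <= ((1 - g)^-1) ^+ q * \sum_(0 <= t < K) v t ^+ q.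
Proof.
move=> B_ge0 u_le sums_le.
suff u_le_all K t : (t < K)%N -> u t <= g * delay T u t + v t.
  by move=> K; apply: delayed_sums; exact: u_le_all.
elim: K t => [|K IH] t //; rewrite ltnS leq_eqVlt => /orP[/eqP ->|]; last exact: IH.
apply: u_le; rewrite /delay; case: ifP => TK //.
have KT : (K - T < K)%N by rewrite ltn_subrL T_ge1 (leq_trans T_ge1 TK).
rewrite -(ler_pXn2r q_gt0) ?nnegrE //.
apply: le_trans _ (le_trans (delayed_sums _ IH) (sums_le K)).
rewrite big_mkord (bigD1 (Ordinal KT)) //= lerDl.
by apply: sumr_ge0 => i _; exact: exprn_ge0.
Qed.

End PowerSums.

Lemma delayed_sup_cond (T : nat) (g B V : R) (u v : nat -> R) :
  (1 <= T)%N -> 0 <= g -> g < 1 -> 0 <= V -> V / (1 - g) <= B ->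
  (forall t, 0 <= u t) -> (forall t, v t <= V) ->
  (forall t, delay T u t <= B -> u t <= g * delay T u t + v t) ->
  forall t, u t <= V / (1 - g).
Proof.
move=> T_ge1 g_ge0 g_lt1 V_ge0 VB u_ge0 v_le u_le.
have c_gt0 : 0 < 1 - g by rewrite subr_gt0.
have Vc_ge0 : 0 <= V / (1 - g) by rewrite divr_ge0 // ltW.
elim/ltn_ind => t IH.
have delay_le : delay T u t <= V / (1 - g).
  rewrite /delay; case: ifP => TK //; apply: IH.
  by rewrite ltn_subrL T_ge1 (leq_trans T_ge1 TK).
apply: le_trans (u_le t (le_trans delay_le VB)) _.
rewrite [leRHS](_ : _ = g * (V / (1 - g)) + V); last by field; rewrite gt_eqF.
by rewrite lerD ?ler_wpM2l.
Qed.

End DelayedInequality.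

Section LpBounds.
Context {R : realType}.

Definition lp_seq (p : pexp) (u : nat -> R) : \bar R :=
  match p with
  | Pfin q => ((\sum_(0 <= k <oo) ((u k) ^+ q)%:E) `^ (q%:R^-1))%E
  | Pinf => ereal_sup [set (u k)%:E | k in [set: nat]]
  end.

Let pow_ge0 (q : nat) (u : nat -> R) : (forall t, 0 <= u t) ->
  forall k, (0 <= k)%N -> true -> (0 <= ((u k) ^+ q)%:E)%E.
Proof. by move=> u_ge0 k _ _; rewrite lee_fin exprn_ge0. Qed.

Lemma lpnorm_seq n (N : 'cV[R]_n -> R) p x : lpnorm N p x = lp_seq p (fun k => N (x k)).
Proof. by case: p. Qed.

Lemma lp_seq_ge0 p u : (forall t, 0 <= u t) -> (0 <= lp_seq p u)%E.
Proof.
move=> u_ge0; case: p => [q|] /=; first exact: poweR_ge0.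
apply: (le_trans (y := (u 0%N)%:E)); first by rewrite lee_fin.
by apply: ereal_sup_ubound; exists 0%N.
Qed.

Lemma lp_fin_le (q : nat) (c : R) (u v : nat -> R) : (0 < q)%N -> 0 <= c ->
  (forall t, 0 <= u t) -> (forall t, 0 <= v t) ->
  (forall K, \sum_(0 <= t < K) u t ^+ q <= c ^+ q * \sum_(0 <= t < K) v t ^+ q) ->
  (lp_seq (Pfin q) u <= c%:E * lp_seq (Pfin q) v)%E.
Proof.
move=> q_gt0 c_ge0 u_ge0 v_ge0 sums_le; rewrite /lp_seq.
have series_le : (\sum_(0 <= k <oo) ((u k) ^+ q)%:E <=
                  (c ^+ q)%:E * \sum_(0 <= k <oo) ((v k) ^+ q)%:E)%E.
  apply: (lime_le (is_cvg_nneseries (@pow_ge0 q _ u_ge0))); apply: nearW => K.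
  rewrite sumEFin; apply: le_trans (_ : _ <= (c ^+ q)%:E * (\sum_(0 <= t < K) v t ^+ q)%:E)%E _.
    by rewrite -EFinM lee_fin; exact: sums_le.
  apply: lee_wpmul2l; first by rewrite lee_fin exprn_ge0.
  by rewrite -sumEFin; exact: nneseries_lim_ge (@pow_ge0 q _ v_ge0).
have cq_root : (((c ^+ q)%:E) `^ (q%:R^-1) = c%:E)%E.
  by rewrite poweR_EFin -powR_mulrn // -powRrM mulfV ?powRr1 // pnatr_eq0 -lt0n.
rewrite -{1}cq_root -poweRM ?lee_fin ?exprn_ge0 ?(nneseries_ge0 (@pow_ge0 q _ v_ge0)) //.
apply: gt0_ler_poweR => //.
- by rewrite in_itv /= leey andbT (nneseries_ge0 (@pow_ge0 q _ u_ge0)).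
- rewrite in_itv /= leey andbT mule_ge0 ?lee_fin ?exprn_ge0 //.
  exact: nneseries_ge0 (@pow_ge0 q _ v_ge0).
Qed.

Lemma lp_fin_sums_le (q : nat) (u : nat -> R) (Y : R) : (0 < q)%N ->
  (forall t, 0 <= u t) -> 0 <= Y -> (lp_seq (Pfin q) u <= Y%:E)%E ->
  forall K, \sum_(0 <= t < K) u t ^+ q <= Y ^+ q.
Proof.
move=> q_gt0 u_ge0 Y_ge0; rewrite /lp_seq => lp_le K.
set S := (\sum_(0 <= k <oo) ((u k) ^+ q)%:E)%E in lp_le *.
have S_root : S = ((S `^ (q%:R^-1)) `^ q%:R)%E.
  by rewrite -poweRrM mulVf ?poweRe1 ?(nneseries_ge0 (@pow_ge0 q _ u_ge0)) // pnatr_eq0 -lt0n.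
rewrite -lee_fin -sumEFin; apply: le_trans (nneseries_lim_ge _ (@pow_ge0 q _ u_ge0)) _.
rewrite -/S S_root -powR_mulrn // -poweR_EFin; apply: gt0_ler_poweR => //.
- by rewrite in_itv /= leey andbT poweR_ge0.
- by rewrite in_itv /= leey andbT lee_fin.
Qed.

Lemma lp_inf_le_term (u : nat -> R) (Y : R) t : (lp_seq Pinf u <= Y%:E)%E -> u t <= Y.
Proof. by rewrite -lee_fin; apply: le_trans; apply: ereal_sup_ubound; exists t. Qed.

Lemma lp_inf_le (u v : nat -> R) (c : R) : 0 < c -> (forall t, 0 <= v t) ->
  (forall V, lp_seq Pinf v = V%:E -> forall t, u t <= c * V) ->
  (lp_seq Pinf u <= c%:E * lp_seq Pinf v)%E.
Proof.
move=> c_gt0 v_ge0 u_le; case E: (lp_seq Pinf v) => [V| |].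
- by apply: ge_ereal_sup => _ [t _ <-]; rewrite -EFinM lee_fin; exact: u_le.
- by rewrite mulry gtr0_sg ?mul1e ?lte_fin // leey.
- by move: (lp_seq_ge0 Pinf v v_ge0); rewrite E.
Qed.

End LpBounds.

Section LpDelayed.
Context {R : realType}.

Lemma lp_delayed_cond p T (g B : R) (u v : nat -> R) : pexp_ok p -> (1 <= T)%N ->
  0 <= g -> g < 1 -> 0 <= B -> (forall t, 0 <= u t) -> (forall t, 0 <= v t) ->
  (forall t, delay T u t <= B -> u t <= g * delay T u t + v t) ->
  (lp_seq p v <= ((1 - g) * B)%:E)%E ->
  (lp_seq p u <= ((1 - g)^-1)%:E * lp_seq p v)%E.
Proof.
move=> hp T_ge1 g_ge0 g_lt1 B_ge0 u_ge0 v_ge0 u_le lpv_le.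
have c_gt0 : 0 < (1 - g)^-1 by rewrite invr_gt0 subr_gt0.
have gB_ge0 : 0 <= (1 - g) * B by rewrite mulr_ge0 // subr_ge0 ltW.
case: p hp lpv_le => [q|] hp lpv_le.
  apply: lp_fin_le => //; first exact: ltW.
  have sums_v := lp_fin_sums_le _ _ _ hp v_ge0 gB_ge0 lpv_le.
  apply: delayed_sums_cond u_le _ => // K.
  apply: le_trans (ler_wpM2l (exprn_ge0 _ (ltW c_gt0)) (sums_v K)) _.
  by rewrite -exprMn mulrA mulVf ?mul1r // gt_eqF // subr_gt0.
apply: lp_inf_le => // V lpvE t.
have v_le s : v s <= V by apply: lp_inf_le_term; rewrite lpvE.
rewrite mulrC; apply: (@delayed_sup_cond _ T g B V u v T_ge1 g_ge0 g_lt1 _ _ u_ge0 v_le u_le).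
- exact: le_trans (v_ge0 0%N) (v_le 0%N).
- by rewrite ler_pdivrMr ?subr_gt0 // mulrC -lee_fin -lpvE.
Qed.

(* Without a level condition, take B := |v|_p / (1 - g) when |v|_p is finite. *)
Lemma lp_delayed p T (g : R) (u v : nat -> R) : pexp_ok p -> (1 <= T)%N ->
  0 <= g -> g < 1 -> (forall t, 0 <= u t) -> (forall t, 0 <= v t) ->
  (forall t, u t <= g * delay T u t + v t) ->
  (lp_seq p u <= ((1 - g)^-1)%:E * lp_seq p v)%E.
Proof.
move=> hp T_ge1 g_ge0 g_lt1 u_ge0 v_ge0 u_le.
have g1 : 0 < 1 - g by rewrite subr_gt0.
case E: (lp_seq p v) (lp_seq_ge0 p v v_ge0) => [V| |] // V_ge0.
  rewrite -E; apply: (lp_delayed_cond _ T _ (V / (1 - g))) => //.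
    by rewrite divr_ge0 // ltW.
  by rewrite E mulrC divfK ?gt_eqF.
by rewrite mulry gtr0_sg ?invr_gt0 // mul1e leey.
Qed.

End LpDelayed.

(* With 0 <= g < a, a dead zone of width eta followed by the gain a contracts
   by the factor g on the range [0, a eta / (a - g)]. *)
Lemma deadzone_gain (R : realFieldType) (a g eta x y : R) : 0 <= g -> g < a ->
  0 <= x -> x <= a * eta / (a - g) -> y <= Num.max 0 (x - eta) -> a * y <= g * x.
Proof.
move=> g_ge0 g_lt_a x_ge0; have ag_gt0 : 0 < a - g by rewrite subr_gt0.
rewrite ler_pdivlMr // le_max => x_le /orP[y_le|y_le]; nra.
Qed.

Section ClosedLoop.
Context {R : realType} {n : nat} {N : 'cV[R]_n -> R} {A : 'M[R]_n} {T : nat}.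
Context {sat : 'cV[R]_n -> 'cV[R]_n} {w what : nat -> 'cV[R]_n}.
Hypothesis N_norm : is_norm N.
Hypothesis what_init : forall t, (t < T)%N -> what t = w t.
Hypothesis what_rec : forall t, (T <= t)%N ->
  what t = (A ^+ T) *m (what (t - T)%N - sat (what (t - T)%N)) + w t.

Lemma closed_loop_delayed (g : R) (P : R -> Prop) :
  (forall h, P (N h) -> opnorm N (A ^+ T) * N (h - sat h) <= g * N h) ->
  forall t, P (delay T (fun k => N (what k)) t) ->
  N (what t) <= g * delay T (fun k => N (what k)) t + N (w t).
Proof.
move=> gain t; rewrite /delay; case: ifP => [Tt P_t | /negbT]; last first.
  by rewrite -ltnNge => tT _; rewrite what_init // mulr0 add0r.
have [_ N_tri _] := N_norm.
rewrite what_rec //; apply: le_trans (N_tri _ _) _; rewrite lerD2r.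
exact: le_trans (opnorm_le N_norm _ _) (gain _ P_t).
Qed.

End ClosedLoop.

Theorem mainTheorem9 (R : realType) (n : nat) (N : 'cV[R]_n -> R)
  (A : 'M[R]_n) (Tbar : nat) (W : set 'cV[R]_n) (sat : 'cV[R]_n -> 'cV[R]_n)
  (p : pexp) (w what : nat -> 'cV[R]_n) :
  is_norm N -> (1 <= Tbar)%N ->
  closed W -> convex_set W -> W 0 ->
  is_sat N W sat ->
  (0 < etabar N W)%E ->
  pexp_ok p ->
  (forall t, (t < Tbar)%N -> what t = w t) ->
  (forall t, (Tbar <= t)%N ->
     what t = (A ^+ Tbar) *m (what (t - Tbar)%N - sat (what (t - Tbar)%N)) + w t) ->
  (forall gamma : R, 0 <= gamma -> gamma < Num.min 1 (opnorm N (A ^+ Tbar)) ->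
     (lpnorm N p w <= ((1 - gamma) * opnorm N (A ^+ Tbar)
                       / (opnorm N (A ^+ Tbar) - gamma))%:E * etabar N W)%E ->
     (lpnorm N p what <= ((1 - gamma)^-1)%:E * lpnorm N p w)%E)
  /\
  (opnorm N (A ^+ Tbar) < 1 ->
     (lpnorm N p w < +oo)%E ->
     (lpnorm N p what <= ((1 - opnorm N (A ^+ Tbar))^-1)%:E * lpnorm N p w)%E).
Proof.
move=> N_norm T_ge1 _ _ W0 sat_min etabar_gt0 hp what_init what_rec.
set a := opnorm N (A ^+ Tbar).
have a_ge0 : 0 <= a := opnorm_ge0 N_norm _.
have [_ N_tri N_hom] := N_norm.
have N_ge0 := seminorm_ge0 N_tri N_hom.
have delayed := closed_loop_delayed N_norm what_init what_rec.
rewrite !lpnorm_seq; split => [g g_ge0 | a_lt1 _].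
  rewrite lt_min => /andP[g_lt1 g_lt_a].
  case E: (etabar N W) etabar_gt0 => [eta| |] // eta_gt0 lpw_le.
    (* finite etabar: below the level B the dead zone contracts by gamma *)
    rewrite lte_fin in eta_gt0; pose B := a * eta / (a - g).
    apply: (lp_delayed_cond _ Tbar _ B) => //.
    - apply: divr_ge0; first exact: mulr_ge0 a_ge0 (ltW eta_gt0).
      by rewrite subr_ge0 ltW.
    - apply: (delayed _ (fun x => x <= B)) => h Nh_le.
      apply: deadzone_gain g_ge0 g_lt_a (N_ge0 h) Nh_le _.
      exact: residual_deadzone N_norm sat_min _ _ eta_gt0 (etabar_ball _ E).
    - suff -> : (1 - g) * B = (1 - g) * a / (a - g) * eta by rewrite EFinM.
      by rewrite /B; ring.
  (* infinite etabar: W is the whole space, so saturation is inactive *)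
  apply: (lp_delayed _ Tbar) => // t; apply: (delayed _ (fun _ => True)) => // h _.
  by rewrite (residual_in N_norm sat_min _ (etabar_pinfty h E)) mulr0 mulr_ge0.
(* part 2: |h - sat h| <= |h| yields the delayed inequality with gain a *)
apply: (lp_delayed _ Tbar) => // t; apply: (delayed _ (fun _ => True)) => // h _.
by rewrite ler_wpM2l // (residual_le N_norm sat_min W0).
Qed.
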